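(* Fix integers $m \ge 1$ and $n_1,\dots,n_m \ge 2$, and consider the $m$-dimensional single parity-check product code transmitted over the binary erasure channel with erasure probability $\epsilon \in [0,1]$, as described in the context. Let $\mathbf{1} = (1,\dots,1) \in A_{\mathrm{info}}$ be the first information position in the successive cancellation decoding order. Then \[ \Pr[S_m(\mathbf{1}) \text{ is false}] = \Pr[E_m(a) \text{ is false}] \quad \text{for every } a \in A_{\mathrm{info}}. \] That is, the erasure probability of the first decoded information bit under successive cancellation decoding equals the erasure probability of each information bit under Elias' decoding. Moreover, this common value equals $\epsilon_m$, where $\epsilon_0 = \epsilon$ and \[ \epsilon_\ell = \epsilon_{\ell-1}\left(1-(1-\epsilon_{\ell-1})^{n_\ell-1}\right) \quad \text{for } \ell = 1,\dots,m. \]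
   Context: Index set and code. Let $A = \{1,\dots,n_1\}\times\cdots\times\{1,\dots,n_m\}$. The $m$-dimensional single parity-check product code (SPC-PC) consists of all binary arrays $x: A \to \{0,1\}$ such that every line in every direction $\ell$ has even weight; a line in direction $\ell$ is obtained by fixing all coordinates except the $\ell$-th. This is the product of the $(n_\ell, n_\ell-1)$ SPC codes, so $n = \prod_\ell n_\ell$ and $k = \prod_\ell (n_\ell-1)$. The information positions are $A_{\mathrm{info}} = \{a \in A : a_\ell \le n_\ell-1 \text{ for all } \ell\}$; a codeword is uniquely determined by its entries there, and these entries are the information bits. Channel. Each codeword entry is independently erased with probability $\epsilon$ and otherwise received correctly. Notation. For $\ell = 0,\dots,m$ let $A_\ell = \{a \in A : a_i \le n_i-1 \text{ for all } i \le \ell\}$, so $A_0 = A$ and $A_m = A_{\mathrm{info}}$. For $a \in A$ and $b \in \{1,\dots,n_\ell\}$, let $a[\ell\leftarrow b]$ denote $a$ with its $\ell$-th coordinate replaced by $b$. Elias' decoder on the erasure channel. This decoder processes dimensions $1,\dots,m$ in one sweep, applying local SPC decoding to each line. For $a \in A$, $E_0(a)$ is true iff entry $a$ is not erased. For $\ell \ge 1$ and $a \in A_\ell$, $E_\ell(a)$ is true iff $E_{\ell-1}(a)$ is true, or $E_{\ell-1}(a[\ell\leftarrow b])$ is true for all $b \in \{1,\dots,n_\ell\}\setminus\{a_\ell\}$. The information bit at $a \in A_{\mathrm{info}}$ is recovered iff $E_m(a)$ is true, and is declared erased otherwise. Successive cancellation (SC) decoder on the erasure channel. The information bits are decoded in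 lexicographic order of $(a_1,\dots,a_m)$, and each local SPC decision uses the previously decided bits. Assuming all earlier bits were decided correctly, the status is given as follows. $S_0 = E_0$. For $\ell \ge 1$ and $a \in A_\ell$, $S_\ell(a)$ is true iff $S_{\ell-1}(a)$ is true, or $S_{\ell-1}(a[\ell\leftarrow b])$ is true for all $b$ with $a_\ell < b \le n_\ell$. The information bit at $a$ is recovered iff $S_m(a)$ is true. *)

From mathcomp Require Import all_boot all_order all_algebra.
Set Implicit Arguments. Unset Strict Implicit. Unset Printing Implicit Defensive.
Import Order.TTheory GRing.Theory Num.Theory.

(* Dimensions n_1, ..., n_m are given as n : nat -> nat (1-based: n l is n_l).
   An index a in A = {1..n_1} x ... x {1..n_m} is a dependent finite function
   a : forall i : 'I_m, 'I_(n i.+1); coordinate i (0-based) is direction i+1,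
   and the value (a i : nat) is a_{i+1} - 1 (0-based entries). *)
Definition idx (m : nat) (n : nat -> nat) := {dffun forall i : 'I_m, 'I_(n i.+1)}.

(* erasure pattern: true = entry is erased *)
Definition pattern (m : nat) (n : nat -> nat) := {ffun idx m n -> bool}.

Definition coord m n (a : idx m n) (l : nat) : nat :=
  if @insub nat (fun k => k < m) _ l.-1 is Some j then nat_of_ord (a (j : 'I_m)) else 0.

(* a[l <- b] : replace the l-th coordinate (l in 1..m) by the 0-based value b *)
Definition upd m n (a : idx m n) (l : nat) (b : nat) : idx m n :=
  [ffun j : 'I_m => if j.+1 == l then insubd (a j) b else a j].

Definition info m n (a : idx m n) : bool := [forall j : 'I_m, (a j).+1 < n j.+1].

(* Elias' decoder status E_l(a) (true = recovered) *)
Fixpoint Eel m n (l : nat) (e : pattern m n) (a : idx m n) : bool :=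
  match l with
  | 0 => ~~ e a
  | k.+1 => Eel k e a ||
            [forall b : 'I_(n k.+1), (nat_of_ord b != coord a k.+1) ==> Eel k e (upd a k.+1 b)]
  end.

Fixpoint Ssc m n (l : nat) (e : pattern m n) (a : idx m n) : bool :=
  match l with
  | 0 => ~~ e a
  | k.+1 => Ssc k e a ||
            [forall b : 'I_(n k.+1), (coord a k.+1 < b) ==> Ssc k e (upd a k.+1 b)]
  end.

Definition Pr (R : pzRingType) m n (eps : R) (P : pred (pattern m n)) : R :=
  (\sum_(e : pattern m n | P e) \prod_(a : idx m n) (if e a then eps else 1 - eps))%R.

Fixpoint epsl (R : pzRingType) (n : nat -> nat) (eps : R) (l : nat) : R :=
  match l with
  | 0 => eps
  | k.+1 => (epsl n eps k * (1 - (1 - epsl n eps k) ^+ (n k.+1).-1))%R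
  end.

From Pilot Require Import Defs.
From mathcomp Require Import all_boot all_order all_algebra.
Import Order.TTheory GRing.Theory Num.Theory.

(* Under Elias' decoder, E_k(a) only reads the erasures at positions that agree
   with a in directions k+1, ..., m (the cylinder of a at level k).  In the
   definition of E_(k+1)(a), the level-k cylinders of a and of its n_(k+1) - 1
   neighbours a[k+1 <- b] are pairwise disjoint, so the events involved are
   independent under the product Bernoulli measure and
   P(not E_(k+1)(a)) = eps_k (1 - (1 - eps_k)^(n_(k+1) - 1)).
   At the first position (1, ..., 1), the successive cancellation condition
   b > a_l is the same as b <> a_l at every level, so S_m(1) = E_m(1). *)

Set Implicit Arguments. Unset Strict Implicit.

Section BernoulliProduct.
Local Open Scope ring_scope.
Variables (R : comPzRingType) (eps : R) (I : finType).
Notation pat := {ffun I -> bool}.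

Definition bern (t : bool) : R := if t then eps else 1 - eps.
Definition weight (e : pat) : R := \prod_x bern (e x).
Definition weight_off (i : I) (e : pat) : R := \prod_(x | x != i) bern (e x).
Definition expect (f : pat -> R) : R := \sum_e f e * weight e.

Definition depends_on (S : pred I) (f : pat -> R) :=
  forall e e' : pat, (forall x, S x -> e x = e' x) -> f e = f e'.

Definition fix_at (i : I) (t : bool) (e : pat) : pat :=
  [ffun x => if x == i then t else e x].
Definition flip_at (i : I) (e : pat) : pat :=
  [ffun x => if x == i then ~~ e x else e x].

Lemma bern_addN t : bern t + bern (~~ t) = 1.
Proof. by case: t; rewrite /bern /= ?subrK // addrC subrK. Qed.

Lemma expect1 : expect (fun _ => 1) = 1.
Proof.
rewrite /expect; under eq_bigr do rewrite mul1r.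
rewrite /weight -(bigA_distr_bigA (fun _ t => bern t)) /=.
by apply: big1 => i _; rewrite big_bool /= (bern_addN true).
Qed.

Lemma expectMl c g : expect (fun e => c * g e) = c * expect g.
Proof. by rewrite /expect mulr_sumr; apply: eq_bigr => e _; rewrite mulrA. Qed.

Lemma expectB f g : expect (fun e => f e - g e) = expect f - expect g.
Proof. by rewrite /expect -sumrB; apply: eq_bigr => e _; rewrite mulrBl. Qed.

Lemma expect_cst c : expect (fun _ => c) = c.
Proof. by rewrite -[c]mulr1 (expectMl c (fun _ => 1)) expect1. Qed.

Lemma eq_expect f g : f =1 g -> expect f = expect g.
Proof. by move=> fg; apply: eq_bigr => e _; rewrite fg. Qed.

Lemma depends_on_sub (S T : pred I) f : {subset S <= T} -> depends_on S f -> depends_on T f.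
Proof. by move=> sST df e e' eqT; apply: df => x /sST; apply: eqT. Qed.

Lemma flip_atK i : involutive (flip_at i).
Proof. by move=> e; apply/ffunP => x; rewrite !ffunE; case: eqP; rewrite ?negbK. Qed.

Lemma weight_at i e : weight e = bern (e i) * weight_off i e.
Proof. by rewrite /weight (bigD1 i). Qed.

Lemma weight_off_flip i e : weight_off i (flip_at i e) = weight_off i e.
Proof. by apply: eq_bigr => x /negbTE xi; rewrite ffunE xi. Qed.

Lemma sum_flip_at i t (g : pat -> R) :
  \sum_(e : pat) g e = \sum_(e : pat | e i == t) (g e + g (flip_at i e)).
Proof.
rewrite big_split (bigID (fun e : pat => e i == t)) /=; congr (_ + _).
rewrite (reindex_inj (inv_inj (flip_atK i))) /=.
by apply: eq_bigl => e; rewrite ffunE eqxx; case: (e i); case: t.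
Qed.

Lemma expect_fix_at i t f :
  expect (fun e => f (fix_at i t e)) = \sum_(e : pat | e i == t) f e * weight_off i e.
Proof.
(* [e] and [flip_at i e] have the same image under [fix_at i t], and their weights add up. *)
rewrite /expect (sum_flip_at i t); apply: eq_bigr => e /eqP eit.
have fixE (e' : pat) : e' i = t -> fix_at i t e' = e'.
  by move=> e'it; apply/ffunP => x; rewrite ffunE; case: eqP => // ->.
have fix_flip : fix_at i t (flip_at i e) = e.
  by apply/ffunP => x; rewrite !ffunE; case: eqP => // ->.
rewrite fixE // fix_flip !(weight_at i) weight_off_flip ffunE eqxx eit.
by rewrite -mulrDr -mulrDl bern_addN mul1r.
Qed.

Lemma expect_condition i f :
  expect f = \sum_t bern t * expect (fun e => f (fix_at i t e)).
Proof.
rewrite big_bool /= !expect_fix_at !mulr_sumr /expect (bigID (fun e : pat => e i)) /=.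
congr (_ + _); apply: eq_big => e; rewrite ?(weight_at i).
- by case: (e i).
- by move=> ei; rewrite ei mulrCA.
- by case: (e i).
- by move=> ei; rewrite (negbTE ei) mulrCA.
Qed.

Lemma expect_complement (B : pat -> bool) :
  expect (fun e => (B e)%:R) = 1 - expect (fun e => (~~ B e)%:R).
Proof.
rewrite -[X in _ = X - _](expect_cst 1) -expectB; apply: eq_expect => e.
by case: (B e); rewrite ?subrr ?subr0.
Qed.

Lemma expect_coord i : expect (fun e => (e i)%:R) = eps.
Proof.
have fix_atE t : expect (fun e => (fix_at i t e i)%:R) = t%:R.
  by rewrite -[RHS]expect_cst; apply: eq_expect => e; rewrite ffunE eqxx.
by rewrite (expect_condition i) big_bool /= !fix_atE mulr1 mulr0 addr0.
Qed.

Lemma expect_indep (S : pred I) f g :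
  depends_on S f -> depends_on (predC S) g ->
  expect (fun e => f e * g e) = expect f * expect g.
Proof.
have [k] := ubnP #|[set x | S x]|; elim: k S f => // k IH S f ltSk df dg.
case: (set_0Vmem [set x | S x]) => [S0 | [i]].
  pose e0 : pat := [ffun _ => false].
  have fE e : f e = f e0 by apply: df => x Sx; move/setP/(_ x): S0; rewrite !inE Sx.
  rewrite (eq_expect fE) expect_cst -expectMl.
  by apply: eq_expect => e; rewrite fE.
rewrite inE => Si; rewrite (expect_condition i) (expect_condition i f) mulr_suml.
apply: eq_bigr => t _; rewrite -mulrA; congr (_ * _).
have gE e : g (fix_at i t e) = g e.
  by apply: dg => x /negP Sx; rewrite ffunE; case: eqP => // xi; rewrite xi in Sx.
rewrite (@eq_expect _ (fun e => f (fix_at i t e) * g e)); last by move=> e; rewrite gE.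
apply: (IH (predD1 S i)).
- rewrite -ltnS (leq_trans _ ltSk) // (cardsD1 i [set x | S x]) inE Si add1n ltnS.
  by apply/subset_leq_card/subsetP => x; rewrite !inE.
- move=> e e' eqS; apply: df => x Sx; rewrite !ffunE; case: eqP => // /eqP xi.
  by apply: eqS; rewrite /= xi.
- by apply: depends_on_sub dg => x; rewrite !inE /= => /negbTE ->; rewrite andbF.
Qed.

Lemma expect_prod_indep (J : eqType) (s : seq J) (F : J -> pat -> R) (S : J -> pred I) :
  uniq s -> (forall j, depends_on (S j) (F j)) ->
  (forall j j' x, j != j' -> S j x -> S j' x -> False) ->
  expect (fun e => \prod_(j <- s) F j e) = \prod_(j <- s) expect (F j).
Proof.
move=> + dF disj; elim: s => [_|j s IH /= /andP[js us]].
  by rewrite big_nil -[RHS]expect1; apply: eq_expect => e; rewrite big_nil.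
rewrite big_cons -IH // (@eq_expect _ (fun e => F j e * \prod_(j <- s) F j e)).
  apply: (@expect_indep (S j)) => //.
  apply: (@depends_on_sub (fun x => has (S^~ x) s)).
    move=> x /hasP[j' j's S'x]; apply/negP => Sjx.
    by apply: (disj j j' x) => //; apply: contraNneq js => ->.
  move=> e e' eqS; rewrite big_seq [RHS]big_seq; apply: eq_bigr => j' j's.
  by apply: dF => x Sx; apply: eqS; apply/hasP; exists j'.
by move=> e; rewrite big_cons.
Qed.

End BernoulliProduct.

Lemma Pr_expect (R : comPzRingType) m n (eps : R) (P : pred (pattern m n)) :
  Pr eps P = expect eps (fun e => (P e)%:R%R).
Proof.
rewrite /Pr /expect big_mkcond /=; apply: eq_bigr => e _.
by case: (P e); rewrite ?mul1r ?mul0r.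
Qed.

Section Decoders.
Variables (m : nat) (n : nat -> nat).
Implicit Types (a x : idx m n) (e : pattern m n).

Lemma coord_ord a (j : 'I_m) : Defs.coord a j.+1 = a j.
Proof. by case: j => j hj; rewrite /Defs.coord /= (insubT (fun k => k < m) hj). Qed.

Lemma coord_out a k : m <= k -> Defs.coord a k.+1 = 0.
Proof. by move=> mk; rewrite /Defs.coord /= insubF // ltnNge mk. Qed.

Lemma upd_ord a (j : 'I_m) (b : 'I_(n j.+1)) : upd a j.+1 b j = b :> nat.
Proof. by rewrite /upd ffunE eqxx /= insubdK //=; apply: ltn_ord. Qed.

Lemma upd_other a (j : 'I_m) l b : j.+1 != l -> upd a l b j = a j.
Proof. by rewrite /upd ffunE => /negbTE ->. Qed.

(* Coordinate [j] is direction [j+1], so this fixes the directions k+1, ..., m. *)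
Definition cylinder k a : pred (idx m n) :=
  fun x => [forall j : 'I_m, (k <= j) ==> (x j == a j)].

Lemma cylinder_disjoint k a a' x (j : 'I_m) :
  k <= j -> a j != a' j :> nat -> cylinder k a x -> cylinder k a' x -> False.
Proof.
move=> kj neq /forallP/(_ j) + /forallP/(_ j); rewrite kj => /eqP xa /eqP xa'.
by rewrite -xa -xa' eqxx in neq.
Qed.

Lemma cylinder_upd_disjoint k (km : k < m) a (b b' : 'I_(n k.+1)) x :
  b != b' -> cylinder k (upd a k.+1 b) x -> cylinder k (upd a k.+1 b') x -> False.
Proof.
move=> neq; apply: (@cylinder_disjoint _ _ _ _ (Ordinal km)) => //=.
by rewrite !(upd_ord a (j := Ordinal km)).
Qed.

Lemma cylinder_upd_disjoint_self k (km : k < m) a (b : 'I_(n k.+1)) x :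
  b != Defs.coord a k.+1 :> nat -> cylinder k a x -> cylinder k (upd a k.+1 b) x -> False.
Proof.
move=> neq; apply: (@cylinder_disjoint _ _ _ _ (Ordinal km)) => //=.
by rewrite (upd_ord a (j := Ordinal km)) eq_sym -(coord_ord a (Ordinal km)).
Qed.

Lemma eq_Eel k a e e' :
  (forall x, cylinder k a x -> e x = e' x) -> Eel k e a = Eel k e' a.
Proof.
elim: k a => [|k IH] a eq_cyl /=.
  by rewrite eq_cyl //; apply/forallP => j; rewrite eqxx implybT.
have sub_cyl a' : (forall j : 'I_m, k < j -> a' j = a j) ->
    forall x, cylinder k a' x -> cylinder k.+1 a x.
  move=> eqa' x /forallP cyl_x; apply/forallP => j; apply/implyP => kj.
  by rewrite -eqa' //; apply: (implyP (cyl_x j)); apply: ltnW.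
congr (_ || _); first by apply: IH => x /(sub_cyl a) cyl_x; apply: eq_cyl; apply: cyl_x.
apply: eq_forallb => b; congr (_ ==> _); apply: IH => x /(sub_cyl (upd a k.+1 b)) cyl_x.
by apply: eq_cyl; apply: cyl_x => j kj; rewrite upd_other // eqSS gtn_eqF.
Qed.

Lemma Ssc_Eel k a e :
  (forall j : 'I_m, j < k -> a j = 0 :> nat) -> Ssc k e a = Eel k e a.
Proof.
elim: k a => [|k IH] a a0 //=.
have coord0 : Defs.coord a k.+1 = 0.
  by case: (ltnP k m) => [km | /coord_out //]; rewrite (coord_ord a (Ordinal km)) a0.
rewrite IH => [|j /ltnW]; last exact: a0.
congr (_ || _); apply: eq_forallb => b; rewrite coord0 lt0n IH //.
by move=> j kj; rewrite upd_other ?a0 ?eqSS ?(ltn_eqF kj) // ltnW.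
Qed.

End Decoders.

Section Elias.
Local Open Scope ring_scope.
Variables (R : comPzRingType) (eps : R) (m : nat) (n : nat -> nat).

Lemma natr_forall_imply (T : finType) (P Q : pred T) :
  [forall b, P b ==> Q b]%:R = \prod_(b | P b) (Q b)%:R :> R.
Proof.
case: (boolP [forall b, _]) => [/forallP allPQ | /forallPn[b]].
  by rewrite big1 // => b Pb; rewrite (implyP (allPQ b)).
by rewrite negb_imply => /andP[Pb /negbTE nQb]; rewrite (bigD1 b) //= nQb mul0r.
Qed.

Lemma expect_not_Eel k (a : idx m n) :
  (k <= m)%N -> expect eps (fun e : pattern m n => (~~ Eel k e a)%:R) = epsl n eps k.
Proof.
elim: k a => [|k IH] a km /=.
  by rewrite -[RHS](expect_coord eps a); apply: eq_expect => e; rewrite negbK.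
pose P (b : 'I_(n k.+1)) := nat_of_ord b != Defs.coord a k.+1.
pose nbrs := [seq b <- index_enum 'I_(n k.+1) | P b].
pose f e := (~~ Eel k e a)%:R : R.
pose g e := \prod_(b <- nbrs) (Eel k e (upd a k.+1 b))%:R : R.
have notE_step e : (~~ Eel k.+1 e a)%:R = f e - f e * g e.
  rewrite /f /g big_filter -natr_forall_imply /=.
  case: (Eel k e a) => /=; first by rewrite mul0r subr0.
  by case: [forall _, _]; rewrite ?mul1r ?subrr ?subr0.
have f_dep : depends_on (cylinder k a) f by move=> e e' eq_cyl; rewrite /f (eq_Eel eq_cyl).
have g_dep : depends_on (predC (cylinder k a)) g.
  pose nbrs_cyl x := has (fun b : 'I_(n k.+1) => cylinder k (upd a k.+1 b) x) nbrs.
  apply: (@depends_on_sub _ _ nbrs_cyl).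
    move=> x /hasP[b]; rewrite mem_filter => /andP[Pb _] cyl_b; apply/negP => cyl_a.
    exact: cylinder_upd_disjoint_self Pb cyl_a cyl_b.
  move=> e e' eq_cyl; rewrite /g big_seq [RHS]big_seq; apply: eq_bigr => b nb_b.
  by rewrite (eq_Eel (e' := e')) // => x cyl_x; apply: eq_cyl; apply/hasP; exists b.
have expect_g : expect eps g = (1 - epsl n eps k) ^+ (n k.+1).-1.
  rewrite (@expect_prod_indep _ _ _ _ _ _ (fun b : 'I_(n k.+1) => cylinder k (upd a k.+1 b))).
  - rewrite big_filter (eq_bigr (fun _ => 1 - epsl n eps k)) => [|b _].
      rewrite prodr_const; congr (_ ^+ _).
      rewrite -[in RHS](card_ord (n k.+1)) -(cardC1 (a (Ordinal km))).
      by apply: eq_card => b; rewrite /P /= inE (coord_ord a (Ordinal km)).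
    by rewrite expect_complement IH // ltnW.
  - exact/filter_uniq/index_enum_uniq.
  - by move=> b e e' eq_cyl; rewrite (eq_Eel eq_cyl).
  - by move=> b b' x; apply: cylinder_upd_disjoint.
rewrite (eq_expect eps notE_step) expectB (expect_indep eps f_dep g_dep) IH ?(ltnW km) //.
by rewrite expect_g mulrBr mulr1.
Qed.

End Elias.


Theorem lemma1 (R : realFieldType) (m : nat) (n : nat -> nat) (eps : R) :
  (1 <= m)%N ->
  (forall l, (1 <= l <= m)%N -> (2 <= n l)%N) ->
  (0 <= eps <= 1)%R ->
  forall one : idx m n, (forall j : 'I_m, nat_of_ord (one j) = 0%N) ->
  Pr eps (fun e => ~~ Ssc m e one) = epsl n eps m /\
  (forall a : idx m n, info a -> Pr eps (fun e => ~~ Eel m e a) = epsl n eps m).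
Proof.
(* Both identities hold at every position and for every [eps] in a commutative ring. *)
move=> _ _ _ one one0; split => [|a _]; rewrite Pr_expect.
  rewrite -(expect_not_Eel eps one (leqnn m)).
  by apply: eq_expect => e; rewrite Ssc_Eel.
exact: expect_not_Eel.
Qed.
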